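(* A finite de Morgan algebra $\mathbf{M}$ is a perfect extension of its Boolean skeleton $B(\mathbf{M})$ if and only if $\mathbf{M}$ is isomorphic to a direct product of finitely many copies of $\{0,1\}$, $\{0,a,1\}$ and $\mathbf{M}_1$.
   Context: A de Morgan algebra is an algebra $(L;\vee,\wedge,{}^\circ,0,1)$ where $(L;\vee,\wedge,0,1)$ is a bounded distributive lattice and ${}^\circ$ is a unary operation satisfying $x^{\circ\circ}=x$, $(x\wedge y)^\circ=x^\circ\vee y^\circ$, $1^\circ=0$. Its Boolean skeleton is the subalgebra $B(\mathbf{M})=\{x\in M\mid x\vee x^\circ=1\}$. An algebra $\mathbf{A}$ is a perfect extension of its subalgebra $\mathbf{B}$ if every congruence of $\mathbf{B}$ has exactly one extension to a congruence of $\mathbf{A}$. $\mathbf{M}_1$ is the four-element de Morgan algebra on $\{0,a,b,1\}$ with lattice order $0<a,b<1$ ($a,b$ incomparable) and $0^\circ=1$, $1^\circ=0$, $a^\circ=a$, $b^\circ=b$; $\{0,1\}$ and $\{0,a,1\}$ denote its subalgebras on those sets. *)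

From Stdlib Require Import List Arith.

Record dmOps := DmOps {
  car : Type;
  djoin : car -> car -> car;
  dmeet : car -> car -> car;
  dneg : car -> car;
  dbot : car;
  dtop : car }.

Arguments djoin {d} _ _.
Arguments dmeet {d} _ _.
Arguments dneg {d} _.
Arguments dbot {d}.
Arguments dtop {d}.

Definition is_deMorgan (M : dmOps) : Prop :=
  (forall x y z : car M, djoin x (djoin y z) = djoin (djoin x y) z) /\
  (forall x y z : car M, dmeet x (dmeet y z) = dmeet (dmeet x y) z) /\
  (forall x y : car M, djoin x y = djoin y x) /\
  (forall x y : car M, dmeet x y = dmeet y x) /\
  (forall x y : car M, djoin x (dmeet x y) = x) /\
  (forall x y : car M, dmeet x (djoin x y) = x) /\
  (forall x y z : car M, dmeet x (djoin y z) = djoin (dmeet x y) (dmeet x z)) /\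
  (forall x : car M, djoin x dbot = x) /\
  (forall x : car M, dmeet x dtop = x) /\
  (forall x : car M, dneg (dneg x) = x) /\
  (forall x y : car M, dneg (dmeet x y) = djoin (dneg x) (dneg y)) /\
  dneg (@dtop M) = dbot.

Definition finite_alg (M : dmOps) : Prop :=
  exists l : list (car M), forall x, In x l.

Definition skeleton (M : dmOps) (x : car M) : Prop := djoin x (dneg x) = dtop.

Definition congruence (M : dmOps) (R : car M -> car M -> Prop) : Prop :=
  (forall x, R x x) /\
  (forall x y, R x y -> R y x) /\
  (forall x y z, R x y -> R y z -> R x z) /\
  (forall x x' y y', R x x' -> R y y' -> R (djoin x y) (djoin x' y')) /\
  (forall x x' y y', R x x' -> R y y' -> R (dmeet x y) (dmeet x' y')) /\
  (forall x x', R x x' -> R (dneg x) (dneg x')).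

(** Congruences of the subalgebra with universe S (S closed under the
    operations): relations on S (represented as relations on M supported
    in S x S) which are equivalences on S compatible with the operations. *)
Definition congruence_on (M : dmOps) (S : car M -> Prop)
    (R : car M -> car M -> Prop) : Prop :=
  (forall x y, R x y -> S x /\ S y) /\
  (forall x, S x -> R x x) /\
  (forall x y, R x y -> R y x) /\
  (forall x y z, R x y -> R y z -> R x z) /\
  (forall x x' y y', R x x' -> R y y' -> R (djoin x y) (djoin x' y')) /\
  (forall x x' y y', R x x' -> R y y' -> R (dmeet x y) (dmeet x' y')) /\
  (forall x x', R x x' -> R (dneg x) (dneg x')).

Definition extends (M : dmOps) (S : car M -> Prop)
    (phi theta : car M -> car M -> Prop) : Prop :=
  congruence M theta /\ forall x y, S x -> S y -> (theta x y <-> phi x y).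

Definition perfect_extension (M : dmOps) (S : car M -> Prop) : Prop :=
  forall phi, congruence_on M S phi ->
    exists theta, extends M S phi theta /\
      forall theta', extends M S phi theta' -> forall x y, theta' x y <-> theta x y.

Definition isomorphic (A B : dmOps) : Prop :=
  exists (f : car A -> car B) (g : car B -> car A),
    (forall x, g (f x) = x) /\ (forall y, f (g y) = y) /\
    (forall x y, f (djoin x y) = djoin (f x) (f y)) /\
    (forall x y, f (dmeet x y) = dmeet (f x) (f y)) /\
    (forall x, f (dneg x) = dneg (f x)) /\
    f dbot = dbot /\ f dtop = dtop.

Definition prod_alg (A B : dmOps) : dmOps :=
  {| car := (car A * car B)%type;
     djoin := fun x y => (djoin (fst x) (fst y), djoin (snd x) (snd y));
     dmeet := fun x y => (dmeet (fst x) (fst y), dmeet (snd x) (snd y));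
     dneg := fun x => (dneg (fst x), dneg (snd x));
     dbot := (dbot, dbot);
     dtop := (dtop, dtop) |}.

Definition fin (n : nat) : Type := { i : nat | i < n }.

Definition pow_alg (A : dmOps) (n : nat) : dmOps :=
  {| car := fin n -> car A;
     djoin := fun f g i => djoin (f i) (g i);
     dmeet := fun f g i => dmeet (f i) (g i);
     dneg := fun f i => dneg (f i);
     dbot := fun _ => dbot;
     dtop := fun _ => dtop |}.

(** M1 = {0,a,b,1}, 0 < a,b < 1, a,b incomparable, a° = a, b° = b. *)
Inductive m1 : Type := m1_0 | m1_a | m1_b | m1_1.

Definition m1_join (x y : m1) : m1 :=
  match x, y with
  | m1_0, z | z, m1_0 => z
  | m1_1, _ | _, m1_1 => m1_1
  | m1_a, m1_a => m1_a
  | m1_b, m1_b => m1_b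
  | _, _ => m1_1
  end.

Definition m1_meet (x y : m1) : m1 :=
  match x, y with
  | m1_1, z | z, m1_1 => z
  | m1_0, _ | _, m1_0 => m1_0
  | m1_a, m1_a => m1_a
  | m1_b, m1_b => m1_b
  | _, _ => m1_0
  end.

Definition m1_neg (x : m1) : m1 :=
  match x with m1_0 => m1_1 | m1_1 => m1_0 | z => z end.

Definition M1 : dmOps :=
  {| car := m1; djoin := m1_join; dmeet := m1_meet; dneg := m1_neg;
     dbot := m1_0; dtop := m1_1 |}.

Definition sub01 (x : m1) : Prop := x = m1_0 \/ x = m1_1.
Definition sub0a1 (x : m1) : Prop := x = m1_0 \/ x = m1_a \/ x = m1_1.

Lemma sub_join (P : m1 -> Prop) (HP : forall x y, P x -> P y -> P (m1_join x y))
  (x y : { z | P z }) : P (m1_join (proj1_sig x) (proj1_sig y)).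
Proof. apply HP; [exact (proj2_sig x) | exact (proj2_sig y)]. Qed.
Lemma sub_meet (P : m1 -> Prop) (HP : forall x y, P x -> P y -> P (m1_meet x y))
  (x y : { z | P z }) : P (m1_meet (proj1_sig x) (proj1_sig y)).
Proof. apply HP; [exact (proj2_sig x) | exact (proj2_sig y)]. Qed.
Lemma sub_neg (P : m1 -> Prop) (HP : forall x, P x -> P (m1_neg x))
  (x : { z | P z }) : P (m1_neg (proj1_sig x)).
Proof. apply HP; exact (proj2_sig x). Qed.

Lemma sub01_join x y : sub01 x -> sub01 y -> sub01 (m1_join x y).
Proof. unfold sub01; intros [->| ->] [->| ->]; simpl; auto. Qed.
Lemma sub01_meet x y : sub01 x -> sub01 y -> sub01 (m1_meet x y).
Proof. unfold sub01; intros [->| ->] [->| ->]; simpl; auto. Qed.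
Lemma sub01_neg x : sub01 x -> sub01 (m1_neg x).
Proof. unfold sub01; intros [->| ->]; simpl; auto. Qed.
Lemma sub0a1_join x y : sub0a1 x -> sub0a1 y -> sub0a1 (m1_join x y).
Proof. unfold sub0a1; intros [->|[->| ->]] [->|[->| ->]]; simpl; auto. Qed.
Lemma sub0a1_meet x y : sub0a1 x -> sub0a1 y -> sub0a1 (m1_meet x y).
Proof. unfold sub0a1; intros [->|[->| ->]] [->|[->| ->]]; simpl; auto. Qed.
Lemma sub0a1_neg x : sub0a1 x -> sub0a1 (m1_neg x).
Proof. unfold sub0a1; intros [->|[->| ->]]; simpl; auto. Qed.

Definition sub_M1 (P : m1 -> Prop)
  (Hj : forall x y, P x -> P y -> P (m1_join x y))
  (Hm : forall x y, P x -> P y -> P (m1_meet x y))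
  (Hn : forall x, P x -> P (m1_neg x))
  (H0 : P m1_0) (H1 : P m1_1) : dmOps :=
  {| car := { x : m1 | P x };
     djoin := fun x y => exist P _ (sub_join P Hj x y);
     dmeet := fun x y => exist P _ (sub_meet P Hm x y);
     dneg := fun x => exist P _ (sub_neg P Hn x);
     dbot := exist P m1_0 H0;
     dtop := exist P m1_1 H1 |}.

Definition M1_01 : dmOps :=
  sub_M1 sub01 sub01_join sub01_meet sub01_neg
    (or_introl eq_refl) (or_intror eq_refl).
Definition M1_0a1 : dmOps :=
  sub_M1 sub0a1 sub0a1_join sub0a1_meet sub0a1_neg
    (or_introl eq_refl) (or_intror (or_intror eq_refl)).

(* Call [M] skeletal when every congruence of [M] is the kernel of
   [x ↦ x ⊓ b] for a Boolean [b]. A congruence [φ] of [B(M)] always extends to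
   [M] by [x ≡ y] iff [x ⊓ c = y ⊓ c] for some Boolean [c] with [c φ 1]; if [M]
   is skeletal, any two extensions are kernels of Boolean elements that each
   extension relates to [1], so they coincide. Conversely, if [M] is finite and
   perfect, a congruence [θ] is the unique extension of its restriction to
   [B(M)], i.e. the kernel of the least [c] with [c θ 1].

   Skeletal algebras are closed under products and isomorphism, and [M1],
   [{0,1}], [{0,a,1}] are skeletal because they are simple. Conversely, a
   skeletal [M] splits as [[0, b] × [0, b°]] along every Boolean [b], down to
   atoms [e] of [B(M)]. For [0 < d < e], skeletality applied to the congruence
   [x ⊔ a = y ⊔ a ∧ x ⊓ a° = y ⊓ a°] with [a = d ⊔ e°] gives [d = d° ⊓ e];
   hence two distinct such [d] are complements in [[0, e]], there are at most
   two, and [[0, e]] is [{0,1}], [{0,a,1}] or [M1]. *)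

From Stdlib Require Import List Arith Lia Classical ClassicalEpsilon
  FunctionalExtensionality ProofIrrelevance.

Local Notation "x ⊔ y" := (djoin x y) (at level 50, left associativity).
Local Notation "x ⊓ y" := (dmeet x y) (at level 40, left associativity).

Section DeMorganLaws.
Variable M : dmOps.
Hypothesis HM : is_deMorgan M.

Lemma joinA (x y z : car M) : x ⊔ (y ⊔ z) = x ⊔ y ⊔ z. Proof. apply HM. Qed.
Lemma meetA (x y z : car M) : x ⊓ (y ⊓ z) = x ⊓ y ⊓ z. Proof. apply HM. Qed.
Lemma joinC (x y : car M) : x ⊔ y = y ⊔ x. Proof. apply HM. Qed.
Lemma meetC (x y : car M) : x ⊓ y = y ⊓ x. Proof. apply HM. Qed.
Lemma joinKI (x y : car M) : x ⊔ (x ⊓ y) = x. Proof. apply HM. Qed.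
Lemma meetKU (x y : car M) : x ⊓ (x ⊔ y) = x. Proof. apply HM. Qed.
Lemma meetUr (x y z : car M) : x ⊓ (y ⊔ z) = x ⊓ y ⊔ x ⊓ z. Proof. apply HM. Qed.
Lemma joinx0 (x : car M) : x ⊔ dbot = x. Proof. apply HM. Qed.
Lemma meetx1 (x : car M) : x ⊓ dtop = x. Proof. apply HM. Qed.
Lemma negK (x : car M) : dneg (dneg x) = x. Proof. apply HM. Qed.
Lemma negI (x y : car M) : dneg (x ⊓ y) = dneg x ⊔ dneg y. Proof. apply HM. Qed.
Lemma neg1 : dneg (@dtop M) = dbot. Proof. apply HM. Qed.

Lemma meetUl (x y z : car M) : (y ⊔ z) ⊓ x = y ⊓ x ⊔ z ⊓ x.
Proof. rewrite meetC, meetUr, (meetC x y), (meetC x z). reflexivity. Qed.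
Lemma neg0 : dneg (@dbot M) = dtop. Proof. rewrite <- neg1, negK. reflexivity. Qed.
Lemma negU (x y : car M) : dneg (x ⊔ y) = dneg x ⊓ dneg y.
Proof. rewrite <- (negK x) at 1. rewrite <- (negK y) at 1. rewrite <- negI, negK. reflexivity. Qed.
Lemma joinxx (x : car M) : x ⊔ x = x.
Proof. rewrite <- (meetKU x x) at 2. apply joinKI. Qed.
Lemma meetxx (x : car M) : x ⊓ x = x.
Proof. rewrite <- (joinKI x x) at 2. apply meetKU. Qed.
Lemma meetx0 (x : car M) : x ⊓ dbot = dbot.
Proof. rewrite meetC. rewrite <- (joinx0 x) at 1. rewrite joinC. apply meetKU. Qed.

Definition dle (x y : car M) := x ⊓ y = x.

Lemma dle_refl x : dle x x. Proof. apply meetxx. Qed.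
Lemma dle_anti x y : dle x y -> dle y x -> x = y.
Proof. unfold dle; intros Hxy Hyx. rewrite <- Hxy, meetC. exact Hyx. Qed.
Lemma dle_trans x y z : dle x y -> dle y z -> dle x z.
Proof. unfold dle; intros Hxy Hyz. rewrite <- Hxy at 1. rewrite <- meetA, Hyz, Hxy. reflexivity. Qed.
Lemma dle_joinP x y : dle x y <-> x ⊔ y = y.
Proof.
  unfold dle; split; intro H.
  - rewrite <- H, joinC, meetC. apply joinKI.
  - rewrite <- H. apply meetKU.
Qed.
Lemma dle_lub x y z : dle x z -> dle y z -> dle (x ⊔ y) z.
Proof. unfold dle; intros Hx Hy. rewrite meetUl, Hx, Hy. reflexivity. Qed.
Lemma dle_glb x y z : dle z x -> dle z y -> dle z (x ⊓ y).
Proof. unfold dle; intros Hx Hy. rewrite meetA, Hx, Hy. reflexivity. Qed.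
Lemma dle_meetl x y z : dle x z -> dle (x ⊓ y) z.
Proof. unfold dle; intro H. rewrite <- meetA, (meetC y z), meetA, H. reflexivity. Qed.
Lemma dle_meetr x y z : dle y z -> dle (x ⊓ y) z.
Proof. unfold dle; intro H. rewrite <- meetA, H. reflexivity. Qed.
Lemma dle_joinl x y z : dle z x -> dle z (x ⊔ y).
Proof. rewrite !dle_joinP. intro H. rewrite joinA, H. reflexivity. Qed.
Lemma dle_joinr x y z : dle z y -> dle z (x ⊔ y).
Proof. rewrite !dle_joinP. intro H. rewrite joinA, (joinC z x), <- joinA, H. reflexivity. Qed.
Lemma dle0x x : dle dbot x. Proof. unfold dle. rewrite meetC. apply meetx0. Qed.
Lemma dlex1 x : dle x dtop. Proof. apply meetx1. Qed.
Lemma dle_neg x y : dle x y -> dle (dneg y) (dneg x).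
Proof. intro H. apply dle_joinP. rewrite <- negI, meetC, H. reflexivity. Qed.

End DeMorganLaws.

(* Lattice (in)equalities are decided by pushing negations to the atoms,
   distributing meets over joins, and searching for a derivation from the
   lattice rules and the [dle] hypotheses in context. *)
Ltac dm_normalize M HM :=
  repeat first [ rewrite (negI M HM) | rewrite (negU M HM) | rewrite (negK M HM)
               | rewrite (neg0 M HM) | rewrite (neg1 M HM) ];
  repeat first [ rewrite (meetUr M HM) | rewrite (meetUl M HM) ].

Ltac dm_search M HM n :=
  match n with
  | O => fail
  | S ?m =>
    lazymatch goal with
    | |- dle M (?x ⊔ ?y) ?z => apply (dle_lub M HM); [dm_search M HM n | dm_search M HM n]
    | |- dle M ?z (?x ⊓ ?y) => apply (dle_glb M HM); [dm_search M HM n | dm_search M HM n]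
    | _ => first
      [ exact (dle_refl M HM _) | exact (dle0x M HM _) | exact (dlex1 M HM _)
      | assumption
      | apply (dle_meetl M HM); dm_search M HM m
      | apply (dle_meetr M HM); dm_search M HM m
      | apply (dle_joinl M HM); dm_search M HM m
      | apply (dle_joinr M HM); dm_search M HM m
      | match goal with H : dle M ?c ?r |- _ =>
          apply (dle_trans M HM _ c); [dm_search M HM m | apply (dle_trans M HM c r); [exact H | dm_search M HM m]] end ]
    end
  end.

Ltac dm_le M HM :=
  dm_normalize M HM;
  first [ dm_search M HM 1 | dm_search M HM 2 | dm_search M HM 3
        | dm_search M HM 4 | dm_search M HM 5 | dm_search M HM 6 ].
Ltac dm_eq M HM := apply (dle_anti M HM); dm_le M HM.

Section Skeleton.
Variable M : dmOps.
Hypothesis HM : is_deMorgan M.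
Notation B := (skeleton M).

Lemma skeletonP x : dle M dtop (x ⊔ dneg x) -> B x.
Proof. intro H. apply (dle_anti M HM); [apply (dlex1 M HM) | exact H]. Qed.
Lemma skeleton_dle x : B x -> dle M dtop (x ⊔ dneg x).
Proof. unfold skeleton; intro H; rewrite H; apply (dle_refl M HM). Qed.
Lemma skeleton_top : B dtop.
Proof. apply skeletonP. dm_le M HM. Qed.
Lemma skeleton_bot : B dbot.
Proof. apply skeletonP. dm_le M HM. Qed.
Lemma skeleton_neg x : B x -> B (dneg x).
Proof. unfold skeleton; intro H. rewrite (negK M HM), (joinC M HM). exact H. Qed.
Lemma skeleton_join x y : B x -> B y -> B (x ⊔ y).
Proof.
  intros Hx%skeleton_dle Hy%skeleton_dle. apply skeletonP.
  apply (dle_trans M HM _ _ _ (dle_glb M HM _ _ _ Hx Hy)). dm_le M HM.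
Qed.
Lemma skeleton_meet x y : B x -> B y -> B (x ⊓ y).
Proof.
  intros Hx%skeleton_dle Hy%skeleton_dle. apply skeletonP.
  apply (dle_trans M HM _ _ _ (dle_glb M HM _ _ _ Hx Hy)). dm_le M HM.
Qed.
Lemma skeleton_meetN x : B x -> dle M (x ⊓ dneg x) dbot.
Proof.
  unfold skeleton; intro H. apply (f_equal dneg) in H.
  rewrite (negU M HM), (negK M HM), (neg1 M HM) in H.
  unfold dle. rewrite (meetx0 M HM), (meetC M HM x), H. reflexivity.
Qed.
Lemma skeleton_meetNx x : B x -> dle M (dneg x ⊓ x) dbot.
Proof. rewrite (meetC M HM). apply skeleton_meetN. Qed.

End Skeleton.

(** * Perfect extensions of the skeleton *)

Definition skeletal_congruences (M : dmOps) : Prop :=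
  forall th, congruence M th -> exists b, skeleton M b /\
    forall x y, th x y <-> x ⊓ b = y ⊓ b.

Section SkeletonExtension.
Variable M : dmOps.
Hypothesis HM : is_deMorgan M.
Notation B := (skeleton M).
Variable phi : car M -> car M -> Prop.
Hypothesis Hphi : congruence_on M B phi.

Definition skeleton_extension x y := exists c, B c /\ phi c dtop /\ x ⊓ c = y ⊓ c.

Let phi_refl x : B x -> phi x x. Proof. apply Hphi. Qed.
Let phi_sym x y : phi x y -> phi y x. Proof. apply Hphi. Qed.
Let phi_trans x y z : phi x y -> phi y z -> phi x z. Proof. apply Hphi. Qed.
Let phi_join x x' y y' : phi x x' -> phi y y' -> phi (x ⊔ y) (x' ⊔ y'). Proof. apply Hphi. Qed.
Let phi_meet x x' y y' : phi x x' -> phi y y' -> phi (x ⊓ y) (x' ⊓ y'). Proof. apply Hphi. Qed.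
Let phi_neg x x' : phi x x' -> phi (dneg x) (dneg x'). Proof. apply Hphi. Qed.

Let phi_meet_top c c' : phi c dtop -> phi c' dtop -> phi (c ⊓ c') dtop.
Proof. intros Hc Hc'. rewrite <- (meetxx M HM dtop). auto. Qed.

Lemma skeleton_extension_congruence : congruence M skeleton_extension.
Proof.
  assert (Hmeet : forall c c', B c -> phi c dtop -> B c' -> phi c' dtop ->
            B (c ⊓ c') /\ phi (c ⊓ c') dtop)
    by (split; [apply (skeleton_meet M HM) | apply phi_meet_top]; auto).
  repeat split.
  - intro x. exists dtop. pose proof (skeleton_top M HM). auto.
  - intros x y [c [Hc [Hp E]]]. exists c; auto.
  - intros x y z [c [Hc [Hp E]]] [c' [Hc' [Hp' E']]]. exists (c ⊓ c').
    split; [|split]; try apply Hmeet; auto.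
    rewrite !(meetA M HM), E, <- !(meetA M HM), !(meetC M HM c), !(meetA M HM), E'.
    reflexivity.
  - intros x x' y y' [c [Hc [Hp E]]] [c' [Hc' [Hp' E']]]. exists (c ⊓ c').
    split; [|split]; try apply Hmeet; auto.
    transitivity ((x ⊓ c) ⊓ c' ⊔ (y ⊓ c') ⊓ c); [dm_eq M HM|].
    rewrite E, E'. dm_eq M HM.
  - intros x x' y y' [c [Hc [Hp E]]] [c' [Hc' [Hp' E']]]. exists (c ⊓ c').
    split; [|split]; try apply Hmeet; auto.
    transitivity ((x ⊓ c) ⊓ (y ⊓ c')); [dm_eq M HM|].
    rewrite E, E'. dm_eq M HM.
  - intros x x' [c [Hc [Hp E]]]. exists c. split; [|split]; auto.
    pose proof (skeleton_meetN M HM c Hc). pose proof (skeleton_meetNx M HM c Hc).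
    transitivity (dneg (x ⊓ c) ⊓ c); [dm_eq M HM|]. rewrite E. dm_eq M HM.
Qed.

Lemma skeleton_extension_restrict x y : B x -> B y -> (skeleton_extension x y <-> phi x y).
Proof.
  intros Hx Hy. split.
  - intros [c [Hc [Hp E]]].
    assert (Hxc : phi (x ⊓ c) x) by (rewrite <- (meetx1 M HM x) at 2; auto).
    assert (Hyc : phi (y ⊓ c) y) by (rewrite <- (meetx1 M HM y) at 2; auto).
    rewrite E in Hxc. eauto.
  - intro H.
    (* [x ⊓ y ⊔ x° ⊓ y°] is the Boolean "x equals y", collapsed to [1] by [phi]. *)
    exists (x ⊓ y ⊔ dneg x ⊓ dneg y). split; [|split].
    + apply (skeleton_join M HM); apply (skeleton_meet M HM);
        auto; apply (skeleton_neg M HM); auto.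
    + replace (@dtop M) with (y ⊓ y ⊔ dneg y ⊓ dneg y)
        by (rewrite !(meetxx M HM); exact Hy).
      pose proof (skeleton_neg M HM y Hy). auto.
    + pose proof (skeleton_meetN M HM x Hx). pose proof (skeleton_meetN M HM y Hy).
      transitivity (x ⊓ y); [dm_eq M HM | symmetry; dm_eq M HM].
Qed.

Lemma skeleton_extension_extends : extends M B phi skeleton_extension.
Proof. split; [exact skeleton_extension_congruence | exact skeleton_extension_restrict]. Qed.

End SkeletonExtension.

Section PerfectSkeleton.
Variable M : dmOps.
Hypothesis HM : is_deMorgan M.
Notation B := (skeleton M).

Lemma perfect_of_skeletal : skeletal_congruences M -> perfect_extension M B.
Proof.
  intros Hsk phi Hphi. exists (skeleton_extension M phi).
  split; [apply skeleton_extension_extends; auto|].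
  intros th [Hth Hext] x y.
  destruct (Hsk _ Hth) as [b [Hb Eb]].
  destruct (Hsk _ (skeleton_extension_congruence M HM phi Hphi)) as [c [Hc Ec]].
  pose proof (skeleton_top M HM) as Htop.
  assert (Hcb : c ⊓ b = b).
  { assert (Hc1 : th c dtop).
    { apply Hext; auto. apply (skeleton_extension_restrict M HM phi Hphi); auto.
      apply Ec. rewrite (meetxx M HM), (meetC M HM), (meetx1 M HM). reflexivity. }
    apply Eb in Hc1. rewrite Hc1, (meetC M HM), (meetx1 M HM). reflexivity. }
  assert (Hbc : b ⊓ c = c).
  { assert (Hb1 : skeleton_extension M phi b dtop).
    { apply (skeleton_extension_restrict M HM phi Hphi); auto. apply Hext; auto.
      apply Eb. rewrite (meetxx M HM), (meetC M HM), (meetx1 M HM). reflexivity. }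
    apply Ec in Hb1. rewrite Hb1, (meetC M HM), (meetx1 M HM). reflexivity. }
  assert (b = c) as -> by (rewrite <- Hbc, <- Hcb at 1; apply (meetC M HM)).
  rewrite Eb, Ec. reflexivity.
Qed.

Lemma least_meet_closed (P : car M -> Prop) (l : list (car M)) :
  P dtop -> (forall c c', P c -> P c' -> P (c ⊓ c')) ->
  exists e, P e /\ forall c, In c l -> P c -> dle M e c.
Proof.
  intros Htop Hmeet. induction l as [|a l [e [He Hle]]].
  - exists dtop. split; [exact Htop | intros c []].
  - destruct (classic (P a)) as [Ha|Ha].
    + exists (a ⊓ e). split; [auto|].
      intros c [<-|Hc] Pc; [apply (dle_meetl M HM), (dle_refl M HM)|].
      apply (dle_meetr M HM); auto.
    + exists e. split; [exact He|]. intros c [<-|Hc] Pc; [contradiction | auto].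
Qed.

Lemma skeletal_of_perfect : finite_alg M -> perfect_extension M B -> skeletal_congruences M.
Proof.
  intros [l Hl] Hperf th Hth.
  pose proof Hth as [Rrefl [Rsym [Rtrans [Rjoin [Rmeet Rneg]]]]].
  set (phi x y := B x /\ B y /\ th x y).
  assert (Hphi : congruence_on M B phi).
  { unfold phi. repeat split; intros; repeat match goal with H : _ /\ _ |- _ => destruct H end;
      eauto using skeleton_join, skeleton_meet, skeleton_neg. }
  destruct (Hperf phi Hphi) as [th0 [_ Huniq]].
  assert (Eth : forall x y, th x y <-> th0 x y).
  { apply Huniq. split; [exact Hth|]. unfold phi; tauto. }
  assert (Eext : forall x y, skeleton_extension M phi x y <-> th0 x y).
  { apply Huniq, skeleton_extension_extends; auto. }
  destruct (least_meet_closed (fun c => B c /\ phi c dtop) l) as [e [[He Hpe] Hle]].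
  { pose proof (skeleton_top M HM). unfold phi; repeat split; auto. }
  { intros c c' [Hc [_ [_ Hpc]]] [Hc' [_ [_ Hpc']]].
    pose proof (skeleton_meet M HM c c' Hc Hc'). pose proof (skeleton_top M HM).
    unfold phi. repeat split; auto. rewrite <- (meetxx M HM dtop). auto. }
  exists e. split; [exact He|]. intros x y. rewrite Eth, <- Eext. split.
  - intros [c [Hc [Hpc E]]]. specialize (Hle c (Hl c) (conj Hc Hpc)).
    unfold dle in Hle. rewrite <- Hle, (meetC M HM e c), !(meetA M HM), E. reflexivity.
  - intro E. exists e. auto.
Qed.

End PerfectSkeleton.

(** * Closure properties and examples *)

Definition bij_hom (X Y : dmOps) (h : car X -> car Y) : Prop :=
  (forall x x', h x = h x' -> x = x') /\ (forall y, exists x, h x = y) /\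
  (forall x y, h (x ⊔ y) = h x ⊔ h y) /\ (forall x y, h (x ⊓ y) = h x ⊓ h y) /\
  (forall x, h (dneg x) = dneg (h x)) /\ h dbot = dbot /\ h dtop = dtop.

Lemma bij_hom_of_isomorphic A B : isomorphic A B -> exists f, bij_hom A B f.
Proof.
  intros [f [g [Hgf [Hfg Hhom]]]]. exists f. split; [|split; [|exact Hhom]].
  - intros x x' E. rewrite <- (Hgf x), <- (Hgf x'), E. reflexivity.
  - intro y. exists (g y). auto.
Qed.

Lemma skeletal_bij_hom X Y h : bij_hom X Y h -> skeletal_congruences Y -> skeletal_congruences X.
Proof.
  intros [Hinj [Hsurj [Hj [Hm [Hn [H0 H1]]]]]] HY th [R1 [R2 [R3 [R4 [R5 R6]]]]].
  set (th' y y' := forall x x', h x = y -> h x' = y' -> th x x').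
  assert (Hpull : forall x x', th' (h x) (h x') <-> th x x').
  { split; [intro H; apply H; reflexivity|].
    intros H z z' E E'. apply Hinj in E. apply Hinj in E'. subst. exact H. }
  assert (Hth' : congruence Y th').
  { repeat split.
    - intro y. destruct (Hsurj y) as [x <-]. apply Hpull, R1.
    - intros y y'. destruct (Hsurj y) as [x <-], (Hsurj y') as [x' <-].
      rewrite !Hpull. apply R2.
    - intros y1 y2 y3. destruct (Hsurj y1) as [x1 <-], (Hsurj y2) as [x2 <-], (Hsurj y3) as [x3 <-].
      rewrite !Hpull. apply R3.
    - intros y1 y1' y2 y2'.
      destruct (Hsurj y1) as [x1 <-], (Hsurj y1') as [x1' <-],
               (Hsurj y2) as [x2 <-], (Hsurj y2') as [x2' <-].
      rewrite <- !Hj, !Hpull. apply R4.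
    - intros y1 y1' y2 y2'.
      destruct (Hsurj y1) as [x1 <-], (Hsurj y1') as [x1' <-],
               (Hsurj y2) as [x2 <-], (Hsurj y2') as [x2' <-].
      rewrite <- !Hm, !Hpull. apply R5.
    - intros y y'. destruct (Hsurj y) as [x <-], (Hsurj y') as [x' <-].
      rewrite <- !Hn, !Hpull. apply R6. }
  destruct (HY th' Hth') as [b [Hb Eb]]. destruct (Hsurj b) as [c <-].
  exists c. split.
  - unfold skeleton in *. apply Hinj. rewrite Hj, Hn, H1. exact Hb.
  - intros x x'. rewrite <- Hpull, Eb, <- !Hm. split; [apply Hinj | congruence].
Qed.

Lemma skeletal_of_simple M (HM : is_deMorgan M) :
  (forall th, congruence M th -> th dbot dtop \/ forall x y, th x y -> x = y) ->
  skeletal_congruences M.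
Proof.
  intros Hsimple th Hth. destruct (Hsimple th Hth) as [H01|Hdiscrete].
  - exists dbot. split; [apply (skeleton_bot M HM)|].
    intros x y. rewrite !(meetx0 M HM). split; [reflexivity|intros _].
    destruct Hth as [R1 [R2 [R3 [R4 [R5 R6]]]]].
    assert (Hbot : forall z, th z dbot).
    { intro z. rewrite <- (meetx1 M HM z) at 1. rewrite <- (meetx0 M HM z).
      apply R5; [apply R1 | apply R2, H01]. }
    eauto.
  - exists dtop. split; [apply (skeleton_top M HM)|].
    intros x y. rewrite !(meetx1 M HM). split; [apply Hdiscrete | intros ->; apply (proj1 Hth)].
Qed.

Lemma deMorgan_M1 : is_deMorgan M1.
Proof. repeat split; intros; repeat match goal with x : car M1 |- _ => destruct x end; reflexivity. Qed.

Lemma sub_M1_eq (P : m1 -> Prop) (x y : {z | P z}) : proj1_sig x = proj1_sig y -> x = y.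
Proof. destruct x, y; simpl; intros; subst. f_equal. apply proof_irrelevance. Qed.

Lemma deMorgan_sub_M1 P Hj Hm Hn H0 H1 : is_deMorgan (sub_M1 P Hj Hm Hn H0 H1).
Proof.
  pose proof deMorgan_M1 as [A1 [A2 [A3 [A4 [A5 [A6 [A7 [A8 [A9 [A10 [A11 A12]]]]]]]]]]].
  repeat split; intros; apply sub_M1_eq; simpl; auto.
Qed.

(* Simplicity of [M1], stated for a relation on [m1] so that it also covers the
   subalgebras [sub_M1 P]. *)
Lemma M1_collapse (P : m1 -> Prop) (R : m1 -> m1 -> Prop) :
  (forall x y, R x y -> P x /\ P y) -> (forall x y, R x y -> R y x) ->
  (forall x y z, R x y -> R y z -> R x z) ->
  (forall x y z, R x y -> P z -> R (m1_meet x z) (m1_meet y z)) ->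
  (forall x y, R x y -> R (m1_neg x) (m1_neg y)) ->
  forall x y, R x y -> x <> y -> R m1_0 m1_1.
Proof.
  intros HP Hsym Htrans Hmeet Hneg x y H Hne. pose proof (HP _ _ H) as [Px Py].
  pose proof (Hneg _ _ H) as N.
  destruct x, y; try congruence;
  try (assert (Ka := Hmeet _ _ m1_a H ltac:(assumption)));
  try (assert (Kb := Hmeet _ _ m1_b H ltac:(assumption)));
  simpl in *;
  try assert (Na := Hneg _ _ Ka); try assert (Nb := Hneg _ _ Kb); simpl in *;
  let c := (first [assumption | apply Hsym; assumption]) in
  first [ c | solve [apply (Htrans _ m1_a); c] | solve [apply (Htrans _ m1_b); c] ].
Qed.

Lemma skeletal_M1 : skeletal_congruences M1.
Proof.
  apply (skeletal_of_simple _ deMorgan_M1). intros th [R1 [R2 [R3 [R4 [R5 R6]]]]].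
  destruct (classic (th m1_0 m1_1)) as [H|H]; [left; exact H | right].
  intros x y Hxy. destruct (classic (x = y)) as [E|E]; [exact E|].
  exfalso. apply H. apply (M1_collapse (fun _ => True) th) with x y; auto.
Qed.

Lemma skeletal_sub_M1 P Hj Hm Hn H0 H1 : skeletal_congruences (sub_M1 P Hj Hm Hn H0 H1).
Proof.
  apply skeletal_of_simple; [apply deMorgan_sub_M1|]. intros th [R1 [R2 [R3 [R4 [R5 R6]]]]].
  set (R u v := exists p q, th (exist P u p) (exist P v q)).
  destruct (classic (R m1_0 m1_1)) as [[p [q H]]|H].
  - left. replace H0 with p by apply proof_irrelevance.
    replace H1 with q by apply proof_irrelevance. exact H.
  - right. intros [x px] [y py] Hxy. apply sub_M1_eq; simpl.
    destruct (classic (x = y)) as [E|E]; [exact E|]. exfalso. apply H.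
    apply (M1_collapse P R) with x y; unfold R.
    + intros u v [p [q _]]; auto.
    + intros u v [p [q Huv]]; eauto.
    + intros u v w [p [q Huv]] [p' [q' Hvw]]. exists p, q'.
      apply R3 with (exist P v q); [exact Huv|].
      replace q with p' by apply proof_irrelevance. exact Hvw.
    + intros u v w [p [q Huv]] Pw. do 2 eexists.
      exact (R5 _ _ (exist P w Pw) (exist P w Pw) Huv (R1 _)).
    + intros u v [p [q Huv]]. do 2 eexists. exact (R6 _ _ Huv).
    + exists px, py. exact Hxy.
    + exact E.
Qed.

Lemma deMorgan_prod A B : is_deMorgan A -> is_deMorgan B -> is_deMorgan (prod_alg A B).
Proof.
  intros [A1 [A2 [A3 [A4 [A5 [A6 [A7 [A8 [A9 [A10 [A11 A12]]]]]]]]]]]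
         [B1 [B2 [B3 [B4 [B5 [B6 [B7 [B8 [B9 [B10 [B11 B12]]]]]]]]]]].
  repeat split; simpl; intros;
  repeat match goal with p : (_ * _)%type |- _ => destruct p end; simpl; f_equal; auto.
Qed.

Lemma deMorgan_pow A n : is_deMorgan A -> is_deMorgan (pow_alg A n).
Proof.
  intros [A1 [A2 [A3 [A4 [A5 [A6 [A7 [A8 [A9 [A10 [A11 A12]]]]]]]]]]].
  repeat split; simpl; intros; apply functional_extensionality; auto.
Qed.

Lemma skeletal_prod A B : is_deMorgan A -> is_deMorgan B ->
  skeletal_congruences A -> skeletal_congruences B -> skeletal_congruences (prod_alg A B).
Proof.
  intros HA HB SA SB th [R1 [R2 [R3 [R4 [R5 R6]]]]].
  set (thA a a' := th (a, dbot) (a', dbot)).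
  set (thB b b' := th (dbot, b) (dbot, b')).
  (* Meeting with [(1, 0)] (resp. [(0, 1)]) projects [th] to the factors. *)
  assert (PA : forall a b a' b', th (a, b) (a', b') -> thA a a').
  { intros a b a' b' H. pose proof (R5 _ _ (dtop, dbot) (dtop, dbot) H (R1 _)) as K.
    simpl in K. rewrite !(meetx1 A HA), !(meetx0 B HB) in K. exact K. }
  assert (PB : forall a b a' b', th (a, b) (a', b') -> thB b b').
  { intros a b a' b' H. pose proof (R5 _ _ (dbot, dtop) (dbot, dtop) H (R1 _)) as K.
    simpl in K. rewrite !(meetx1 B HB), !(meetx0 A HA) in K. exact K. }
  assert (CA : congruence A thA).
  { unfold thA; repeat split; intros; eauto.
    - rewrite <- (joinxx B HB dbot). exact (R4 _ _ _ _ H H0).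
    - rewrite <- (meetxx B HB dbot). exact (R5 _ _ _ _ H H0).
    - exact (PA _ _ _ _ (R6 _ _ H)). }
  assert (CB : congruence B thB).
  { unfold thB; repeat split; intros; eauto.
    - rewrite <- (joinxx A HA dbot). exact (R4 _ _ _ _ H H0).
    - rewrite <- (meetxx A HA dbot). exact (R5 _ _ _ _ H H0).
    - exact (PB _ _ _ _ (R6 _ _ H)). }
  destruct (SA _ CA) as [bA [BA EA]], (SB _ CB) as [bB [BB EB]].
  exists (bA, bB). split.
  - unfold skeleton in *. simpl. rewrite BA, BB. reflexivity.
  - intros [a b] [a' b']. simpl. split.
    + intro H. f_equal; [apply EA, (PA _ _ _ _ H) | apply EB, (PB _ _ _ _ H)].
    + intro H. injection H as EAa EBb. apply EA in EAa. apply EB in EBb.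
      pose proof (R4 _ _ _ _ EAa EBb) as K. simpl in K.
      rewrite !(joinx0 A HA), (joinC B HB dbot b), (joinC B HB dbot b'), !(joinx0 B HB) in K.
      exact K.
Qed.

Lemma fin_eq n (i j : fin n) : proj1_sig i = proj1_sig j -> i = j.
Proof. destruct i, j; simpl; intros; subst. f_equal. apply proof_irrelevance. Qed.

Definition fin_l a b (i : fin a) : fin (a + b) :=
  exist _ (proj1_sig i) (Nat.lt_lt_add_r _ _ _ (proj2_sig i)).
Definition fin_r a b (i : fin b) : fin (a + b) :=
  exist _ (a + proj1_sig i) (proj1 (Nat.add_lt_mono_l _ _ a) (proj2_sig i)).

Lemma fin_split_lt a b n : n < a + b -> ~ n < a -> n - a < b. Proof. lia. Qed.

Definition fin_glue {X : Type} a b (h1 : fin a -> X) (h2 : fin b -> X) (i : fin (a + b)) : X :=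
  let (n, Hn) := i in
  match lt_dec n a with
  | left p => h1 (exist _ n p)
  | right p => h2 (exist _ (n - a) (fin_split_lt a b n Hn p))
  end.

Definition pow_split A a b (h : car (pow_alg A (a + b))) :
  car (prod_alg (pow_alg A a) (pow_alg A b)) :=
  (fun i => h (fin_l a b i), fun i => h (fin_r a b i)).

Lemma bij_hom_pow_split A a b :
  bij_hom (pow_alg A (a + b)) (prod_alg (pow_alg A a) (pow_alg A b)) (pow_split A a b).
Proof.
  split; [|split; [|repeat split]].
  - intros h h' E. injection E as El Er.
    apply functional_extensionality. intros [n p].
    destruct (lt_dec n a) as [q|q].
    + replace (exist _ n p) with (fin_l a b (exist _ n q)) by (apply fin_eq; reflexivity).
      exact (equal_f El _).
    + replace (exist _ n p) with (fin_r a b (exist _ (n - a) (fin_split_lt a b n p q)))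
        by (apply fin_eq; simpl; lia).
      exact (equal_f Er _).
  - intros [h1 h2]. exists (fin_glue a b h1 h2). unfold pow_split.
    f_equal; apply functional_extensionality; intros [n p]; simpl.
    + destruct (lt_dec n a) as [q|q]; [|lia]. f_equal. apply fin_eq. reflexivity.
    + destruct (lt_dec (a + n) a) as [q|q]; [lia|]. f_equal. apply fin_eq. simpl. lia.
Qed.

Definition fin0 : fin 1 := exist _ 0 (le_n 1).

Lemma fin1_ext X (h h' : fin 1 -> X) : h fin0 = h' fin0 -> h = h'.
Proof.
  intro E. apply functional_extensionality. intros [[|n] p]; [|lia].
  replace (exist _ 0 p) with fin0 by (apply fin_eq; reflexivity). exact E.
Qed.

Lemma fin0_ext X (h h' : fin 0 -> X) : h = h'.
Proof. apply functional_extensionality. intros [n p]. lia. Qed.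

Lemma bij_hom_pow1 A : bij_hom (pow_alg A 1) A (fun h => h fin0).
Proof.
  split; [|split; [|repeat split]].
  - intros h h'. apply fin1_ext.
  - intro y. exists (fun _ => y). reflexivity.
Qed.

Lemma skeletal_pow A n : is_deMorgan A -> skeletal_congruences A ->
  skeletal_congruences (pow_alg A n).
Proof.
  intros HA SA. induction n as [|n IH].
  - intros th Hth. exists dtop. split; [apply skeleton_top, deMorgan_pow, HA|].
    intros x y. rewrite (fin0_ext _ x y). split; intros _; [reflexivity | apply (proj1 Hth)].
  - apply (skeletal_bij_hom _ _ _ (bij_hom_pow_split A 1 n)).
    apply skeletal_prod; [apply deMorgan_pow; exact HA | apply deMorgan_pow; exact HA | | exact IH].
    exact (skeletal_bij_hom _ _ _ (bij_hom_pow1 A) SA).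
Qed.

Definition std_prod i j k : dmOps :=
  prod_alg (pow_alg M1_01 i) (prod_alg (pow_alg M1_0a1 j) (pow_alg M1 k)).

Lemma skeletal_std_prod i j k : skeletal_congruences (std_prod i j k).
Proof.
  assert (D01 : is_deMorgan M1_01) by apply deMorgan_sub_M1.
  assert (D0a1 : is_deMorgan M1_0a1) by apply deMorgan_sub_M1.
  assert (S01 : skeletal_congruences M1_01) by apply skeletal_sub_M1.
  assert (S0a1 : skeletal_congruences M1_0a1) by apply skeletal_sub_M1.
  pose proof deMorgan_M1. pose proof skeletal_M1.
  apply skeletal_prod; [| | apply skeletal_pow | apply skeletal_prod; try apply skeletal_pow];
    repeat apply deMorgan_prod; try apply deMorgan_pow; auto.
Qed.

(** * Intervals below Boolean elements *)

Section Interval.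
Variable M : dmOps.
Hypothesis HM : is_deMorgan M.
Notation B := (skeleton M).
Notation dle := (dle M).

(* [g] embeds [P] onto the interval [[0, e]], on which negation is relative:
   [x ↦ x° ⊓ e]; for Boolean [e] this is the quotient by [x ⊓ e = y ⊓ e]. *)
Definition interval_iso (e : car M) (P : dmOps) := exists g : car P -> car M,
  (forall u v, g u = g v -> u = v) /\ (forall x, dle x e -> exists u, g u = x) /\
  (forall u, dle (g u) e) /\
  (forall u v, g (u ⊔ v) = g u ⊔ g v) /\ (forall u v, g (u ⊓ v) = g u ⊓ g v) /\
  (forall u, g (dneg u) = dneg (g u) ⊓ e) /\ g dbot = dbot /\ g dtop = e.

Lemma isomorphic_of_interval_iso_top P : interval_iso dtop P -> isomorphic M P.
Proof.
  intros [g [Ginj [Gsurj [_ [Gj [Gm [Gn [G0 G1]]]]]]]].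
  set (f x := proj1_sig (constructive_indefinite_description _ (Gsurj x (dlex1 M HM x)))).
  assert (Hgf : forall x, g (f x) = x)
    by (intro x; unfold f; destruct constructive_indefinite_description; assumption).
  exists f, g. repeat split; intros; try apply Ginj;
    rewrite ?Gj, ?Gm, ?Gn, ?Hgf, ?(meetx1 M HM); auto.
Qed.

Lemma interval_iso_bij_hom e P A h : interval_iso e A -> bij_hom P A h -> interval_iso e P.
Proof.
  intros [g [Ginj [Gsurj [Gle [Gj [Gm [Gn [G0 G1]]]]]]]] [Hinj [Hsurj [Hj [Hm [Hn [H0 H1]]]]]].
  exists (fun u => g (h u)). repeat split; intros; rewrite ?Hj, ?Hm, ?Hn, ?H0, ?H1; auto.
  destruct (Gsurj x H) as [u <-]. destruct (Hsurj u) as [v <-]. eauto.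
Qed.

Lemma interval_iso_bot P : (forall u v : car P, u = v) -> interval_iso dbot P.
Proof.
  intro Htriv. exists (fun _ => dbot). split; [|split; [|repeat split]]; intros; auto.
  - exists dtop. apply (dle_anti M HM); [apply (dle0x M HM) | exact H].
  - apply (dle_refl M HM).
  - symmetry; apply (joinxx M HM).
  - symmetry; apply (meetxx M HM).
  - symmetry; apply (meetx0 M HM).
Qed.

Lemma interval_iso_prod e1 e2 P1 P2 : B e1 -> B e2 -> dle (e1 ⊓ e2) dbot ->
  interval_iso e1 P1 -> interval_iso e2 P2 -> interval_iso (e1 ⊔ e2) (prod_alg P1 P2).
Proof.
  intros B1 B2 D12 [g1 [Ginj1 [Gsurj1 [Gle1 [Gj1 [Gm1 [Gn1 [G01 G11]]]]]]]]
                   [g2 [Ginj2 [Gsurj2 [Gle2 [Gj2 [Gm2 [Gn2 [G02 G12]]]]]]]].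
  pose proof (skeleton_meetN M HM e1 B1). pose proof (skeleton_meetN M HM e2 B2).
  unfold skeleton in B1, B2.
  (* [e1] and [e2] are disjoint complemented elements, so [e2 ≤ e1°]. *)
  assert (L21 : dle e2 (dneg e1)).
  { rewrite <- (meetx1 M HM e2), <- B1. dm_le M HM. }
  assert (L12 : dle e1 (dneg e2)).
  { rewrite <- (meetx1 M HM e1), <- B2. dm_le M HM. }
  exists (fun p => g1 (fst p) ⊔ g2 (snd p)). repeat split.
  - intros [u v] [u' v'] E. simpl in E.
    pose proof (Gle1 u). pose proof (Gle1 u'). pose proof (Gle2 v). pose proof (Gle2 v').
    assert (E1 : g1 u = g1 u').
    { transitivity ((g1 u ⊔ g2 v) ⊓ e1); [dm_eq M HM|]. rewrite E. dm_eq M HM. }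
    assert (E2 : g2 v = g2 v').
    { transitivity ((g1 u ⊔ g2 v) ⊓ e2); [dm_eq M HM|]. rewrite E. dm_eq M HM. }
    rewrite (Ginj1 _ _ E1), (Ginj2 _ _ E2). reflexivity.
  - intros x Hx.
    destruct (Gsurj1 (x ⊓ e1)) as [u Hu]; [dm_le M HM|].
    destruct (Gsurj2 (x ⊓ e2)) as [v Hv]; [dm_le M HM|].
    exists (u, v). simpl. rewrite Hu, Hv, <- (meetUr M HM). exact Hx.
  - intros [u v]. pose proof (Gle1 u). pose proof (Gle2 v). simpl. dm_le M HM.
  - intros [u v] [u' v']. simpl. rewrite Gj1, Gj2. dm_eq M HM.
  - intros [u v] [u' v']. simpl. rewrite Gm1, Gm2.
    pose proof (Gle1 u). pose proof (Gle1 u'). pose proof (Gle2 v). pose proof (Gle2 v').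
    dm_eq M HM.
  - intros [u v]. simpl. rewrite Gn1, Gn2.
    pose proof (dle_trans M HM _ _ _ L21 (dle_neg M HM _ _ (Gle1 u))).
    pose proof (dle_trans M HM _ _ _ L12 (dle_neg M HM _ _ (Gle2 v))).
    dm_eq M HM.
  - simpl. rewrite G01, G02. apply (joinxx M HM).
  - simpl. rewrite G11, G12. reflexivity.
Qed.

End Interval.

(** * Atoms of the skeleton *)

Section JoinNegKernel.
Variable M : dmOps.
Hypothesis HM : is_deMorgan M.

Definition join_neg_kernel (a : car M) x y := x ⊔ a = y ⊔ a /\ x ⊓ dneg a = y ⊓ dneg a.

Lemma join_neg_kernel_congruence a : congruence M (join_neg_kernel a).
Proof.
  unfold join_neg_kernel. repeat split; intros;
    repeat match goal with H : _ /\ _ |- _ => destruct H end; try congruence.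
  - transitivity ((x ⊔ a) ⊔ (y ⊔ a)); [dm_eq M HM|]. rewrite H, H0. dm_eq M HM.
  - transitivity ((x ⊓ dneg a) ⊔ (y ⊓ dneg a)); [dm_eq M HM|].
    rewrite H1, H2. dm_eq M HM.
  - transitivity ((x ⊔ a) ⊓ (y ⊔ a)); [dm_eq M HM|]. rewrite H, H0. dm_eq M HM.
  - transitivity ((x ⊓ dneg a) ⊓ (y ⊓ dneg a)); [dm_eq M HM|]. rewrite H1, H2. dm_eq M HM.
  - transitivity (dneg (x ⊓ dneg a)); [dm_eq M HM|]. rewrite H0. dm_eq M HM.
  - transitivity (dneg (x ⊔ a)); [dm_eq M HM|]. rewrite H. dm_eq M HM.
Qed.

End JoinNegKernel.

Section BooleanAtom.
Variable M : dmOps.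
Hypothesis HM : is_deMorgan M.
Hypothesis Hsk : skeletal_congruences M.
Notation B := (skeleton M).
Notation dle := (dle M).
Variable e : car M.
Hypothesis He : B e.
Hypothesis Hatom : forall b, B b -> dle b e -> b = dbot \/ b = e.

Let He_disj : dle (e ⊓ dneg e) dbot := skeleton_meetN M HM e He.

(* [join_neg_kernel (d ⊔ e°)] is the kernel of meeting with some Boolean [b].
   As [e] is an atom of [B(M)], either [b ⊓ e = 0], and then [e ≡ 0] forces
   [d = e], or [e ≤ b], and then [d ≡ d ⊓ d°] forces [d ≤ d°]. *)
Lemma atom_below_eq_or_le_neg d : dle d e -> d = e \/ dle d (dneg d).
Proof.
  intro Hd.
  destruct (Hsk _ (join_neg_kernel_congruence M HM (d ⊔ dneg e))) as [b [Hb Eb]].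
  destruct (Hatom (b ⊓ e) (skeleton_meet M HM b e Hb He)) as [E|E]; [dm_le M HM| |].
  - left. assert (H : join_neg_kernel M (d ⊔ dneg e) e dbot).
    { apply Eb. rewrite (meetC M HM e), E, (meetC M HM), (meetx0 M HM). reflexivity. }
    destruct H as [H _]. symmetry.
    transitivity (e ⊓ (e ⊔ (d ⊔ dneg e))); [dm_eq M HM|]. rewrite H. dm_eq M HM.
  - right. assert (Hdb : dle d b).
    { apply (dle_trans M HM _ e _ Hd). unfold dle. rewrite (meetC M HM). exact E. }
    assert (H : join_neg_kernel M (d ⊔ dneg e) d (d ⊓ dneg d)) by (split; dm_eq M HM).
    apply Eb in H. apply (dle_trans M HM _ (d ⊓ b)); [dm_le M HM|]. rewrite H. dm_le M HM.
Qed.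

Lemma atom_neg_below d : dle d e -> d <> dbot -> dle (dneg d ⊓ e) d.
Proof.
  intros Hd Hd0.
  destruct (atom_below_eq_or_le_neg (dneg d ⊓ e)) as [E|E]; [dm_le M HM| |].
  - exfalso. apply Hd0. assert (Hed : dle e (dneg d)) by (rewrite <- E; dm_le M HM).
    apply (dle_neg M HM) in Hed. rewrite (negK M HM) in Hed.
    apply (dle_anti M HM); dm_le M HM.
  - rewrite (negI M HM), (negK M HM) in E.
    apply (dle_trans M HM _ ((d ⊔ dneg e) ⊓ e)); [apply (dle_glb M HM)|]; dm_le M HM.
Qed.

Definition inner d := dle d e /\ d <> dbot /\ d <> e.

Lemma below_atom_cases x : dle x e -> x = dbot \/ x = e \/ inner x.
Proof.
  intro Hx. destruct (classic (x = dbot)); auto.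
  destruct (classic (x = e)); auto. right; right. repeat split; auto.
Qed.

Lemma inner_neg d : inner d -> d = dneg d ⊓ e.
Proof.
  intros [Hd [Hd0 Hde]]. apply (dle_anti M HM).
  - destruct (atom_below_eq_or_le_neg d Hd); [contradiction|]. dm_le M HM.
  - apply atom_neg_below; assumption.
Qed.

Lemma eq_of_meet_join (x y : car M) : x ⊓ y = x ⊔ y -> x = y.
Proof.
  intro E. apply (dle_anti M HM); apply (dle_trans M HM _ (x ⊔ y)); try dm_le M HM;
    rewrite <- E; dm_le M HM.
Qed.

(* Since [d = d° ⊓ e] for inner [d], the relative negation swaps meets and
   joins of two inner elements; so if their meet or join were inner too, they
   would coincide. *)
Lemma inner_complement d1 d2 : inner d1 -> inner d2 -> d1 <> d2 ->
  d1 ⊓ d2 = dbot /\ d1 ⊔ d2 = e.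
Proof.
  intros I1 I2 N12. pose proof (inner_neg _ I1) as E1. pose proof (inner_neg _ I2) as E2.
  destruct I1 as [L1 [Z1 T1]], I2 as [L2 [Z2 T2]]. split.
  - destruct (below_atom_cases (d1 ⊓ d2)) as [E|[E|E]]; [dm_le M HM | exact E | |].
    + exfalso. apply T1. apply (dle_anti M HM); [exact L1|]. rewrite <- E. dm_le M HM.
    + exfalso. apply N12, eq_of_meet_join. rewrite (inner_neg _ E).
      transitivity (dneg d1 ⊓ e ⊔ dneg d2 ⊓ e); [dm_eq M HM|]. rewrite <- E1, <- E2. reflexivity.
  - destruct (below_atom_cases (d1 ⊔ d2)) as [E|[E|E]]; [dm_le M HM | | exact E |].
    + exfalso. apply Z1. apply (dle_anti M HM); [|apply (dle0x M HM)]. rewrite <- E. dm_le M HM.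
    + exfalso. apply N12, eq_of_meet_join. rewrite (inner_neg _ E).
      transitivity ((dneg d1 ⊓ e) ⊓ (dneg d2 ⊓ e)); [|dm_eq M HM]. rewrite <- E1, <- E2. reflexivity.
Qed.

Lemma inner_at_most_two d1 d2 d3 : inner d1 -> inner d2 -> inner d3 ->
  d1 <> d2 -> d1 <> d3 -> d2 <> d3 -> False.
Proof.
  intros I1 I2 I3 N12 N13 N23.
  destruct (inner_complement _ _ I1 I2 N12) as [M12 _], (inner_complement _ _ I1 I3 N13) as [M13 _],
    (inner_complement _ _ I2 I3 N23) as [_ J23].
  destruct I1 as [L1 [Z1 _]]. apply Z1.
  transitivity (d1 ⊓ (d2 ⊔ d3)); [rewrite J23; symmetry; exact L1|].
  rewrite (meetUr M HM), M12, M13. apply (joinxx M HM).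
Qed.

End BooleanAtom.

Lemma interval_iso_sub_M1 M e P Hj Hm Hn H0 H1 (g : m1 -> car M) :
  (forall u v, P u -> P v -> g u = g v -> u = v) ->
  (forall x, dle M x e -> exists u, P u /\ g u = x) ->
  (forall u, P u -> dle M (g u) e) ->
  (forall u v, P u -> P v -> g (m1_join u v) = g u ⊔ g v) ->
  (forall u v, P u -> P v -> g (m1_meet u v) = g u ⊓ g v) ->
  (forall u, P u -> g (m1_neg u) = dneg (g u) ⊓ e) ->
  g m1_0 = dbot -> g m1_1 = e ->
  interval_iso M e (sub_M1 P Hj Hm Hn H0 H1).
Proof.
  intros Ginj Gsurj Gle Gj Gm Gn G0 G1. exists (fun u => g (proj1_sig u)).
  split; [|split].
  - intros [u pu] [v pv] E. apply sub_M1_eq. simpl in *. auto.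
  - intros x Hx. destruct (Gsurj x Hx) as [u [pu <-]]. exists (exist P u pu). reflexivity.
  - repeat split; try intros [u pu]; try intros [v pv]; simpl; auto.
Qed.

Lemma bij_hom_std_prod_01 : bij_hom (std_prod 1 0 0) M1_01 (fun p => fst p fin0).
Proof.
  split; [|split; [|repeat split]].
  - intros [h1 [h2 h3]] [h1' [h2' h3']] E. simpl in E.
    rewrite (fin1_ext _ h1 h1' E), (fin0_ext _ h2 h2'), (fin0_ext _ h3 h3'). reflexivity.
  - intro y. exists ((fun _ => y), ((fun _ => dbot), (fun _ => dbot))). reflexivity.
Qed.

Lemma bij_hom_std_prod_0a1 : bij_hom (std_prod 0 1 0) M1_0a1 (fun p => fst (snd p) fin0).
Proof.
  split; [|split; [|repeat split]].
  - intros [h1 [h2 h3]] [h1' [h2' h3']] E. simpl in E.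
    rewrite (fin1_ext _ h2 h2' E), (fin0_ext _ h1 h1'), (fin0_ext _ h3 h3'). reflexivity.
  - intro y. exists ((fun _ => dbot), ((fun _ => y), (fun _ => dbot))). reflexivity.
Qed.

Lemma bij_hom_std_prod_M1 : bij_hom (std_prod 0 0 1) M1 (fun p => snd (snd p) fin0).
Proof.
  split; [|split; [|repeat split]].
  - intros [h1 [h2 h3]] [h1' [h2' h3']] E. simpl in E.
    rewrite (fin1_ext _ h3 h3' E), (fin0_ext _ h1 h1'), (fin0_ext _ h2 h2'). reflexivity.
  - intro y. exists ((fun _ => dbot), ((fun _ => dbot), (fun _ => y))). reflexivity.
Qed.

Lemma std_prod0_trivial (u v : car (std_prod 0 0 0)) : u = v.
Proof.
  destruct u as [h1 [h2 h3]], v as [h1' [h2' h3']].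
  rewrite (fin0_ext _ h1 h1'), (fin0_ext _ h2 h2'), (fin0_ext _ h3 h3'). reflexivity.
Qed.

Definition std_prod_split i1 j1 k1 i2 j2 k2
    (p : car (std_prod (i1 + i2) (j1 + j2) (k1 + k2))) :
    car (prod_alg (std_prod i1 j1 k1) (std_prod i2 j2 k2)) :=
  let '(s1, s1') := pow_split _ i1 i2 (fst p) in
  let '(s2, s2') := pow_split _ j1 j2 (fst (snd p)) in
  let '(s3, s3') := pow_split _ k1 k2 (snd (snd p)) in
  ((s1, (s2, s3)), (s1', (s2', s3'))).

Lemma bij_hom_std_prod_split i1 j1 k1 i2 j2 k2 :
  bij_hom (std_prod (i1 + i2) (j1 + j2) (k1 + k2))
    (prod_alg (std_prod i1 j1 k1) (std_prod i2 j2 k2))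
    (std_prod_split i1 j1 k1 i2 j2 k2).
Proof.
  destruct (bij_hom_pow_split M1_01 i1 i2) as [I1 [S1 _]],
    (bij_hom_pow_split M1_0a1 j1 j2) as [I2 [S2 _]],
    (bij_hom_pow_split M1 k1 k2) as [I3 [S3 _]].
  split; [|split; [|repeat split]].
  - intros [h1 [h2 h3]] [h1' [h2' h3']] E. unfold std_prod_split in E. simpl in E.
    injection E as E1 E2 E3 E1' E2' E3'.
    assert (h1 = h1') as -> by (apply I1; unfold pow_split; congruence).
    assert (h2 = h2') as -> by (apply I2; unfold pow_split; congruence).
    assert (h3 = h3') as -> by (apply I3; unfold pow_split; congruence).
    reflexivity.
  - intros [[a1 [b1 c1]] [a2 [b2 c2]]].
    destruct (S1 (a1, a2)) as [h1 E1], (S2 (b1, b2)) as [h2 E2], (S3 (c1, c2)) as [h3 E3].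
    exists (h1, (h2, h3)). unfold std_prod_split. cbn [fst snd]. rewrite E1, E2, E3. reflexivity.
Qed.

Section AtomInterval.
Variable M : dmOps.
Hypothesis HM : is_deMorgan M.
Hypothesis Hsk : skeletal_congruences M.
Notation B := (skeleton M).
Notation dle := (dle M).
Notation inner := (inner M).
Variable e : car M.
Hypothesis He : B e.
Hypothesis Hatom : forall b, B b -> dle b e -> b = dbot \/ b = e.
Hypothesis He0 : e <> dbot.

Let He_disj' : dle (dneg e ⊓ e) dbot := skeleton_meetNx M HM e He.

Ltac not_in_sub :=
  exfalso; match goal with
  | H : sub01 _ |- _ => destruct H as [H|H]; discriminate H
  | H : sub0a1 _ |- _ => destruct H as [H|[H|H]]; discriminate H
  end.

Ltac interval_case :=
  try unfold M1; simpl; first [ not_in_sub | reflexivity | assumption | symmetry; assumption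
               | dm_eq M HM | dm_le M HM ].

Lemma interval_iso_atom_M1 ma mb : inner e ma -> inner e mb -> ma <> mb ->
  interval_iso M e M1.
Proof.
  intros Ia Ib Nab.
  pose proof (inner_neg M HM Hsk e He Hatom ma Ia) as Ea.
  pose proof (inner_neg M HM Hsk e He Hatom mb Ib) as Eb.
  destruct (inner_complement M HM Hsk e He Hatom ma mb Ia Ib Nab) as [Mab Jab].
  destruct (inner_complement M HM Hsk e He Hatom mb ma Ib Ia (not_eq_sym Nab)) as [Mba Jba].
  pose proof Ia as [La [Za Ta]]. pose proof Ib as [Lb [Zb Tb]].
  exists (fun u => match u with m1_0 => dbot | m1_a => ma | m1_b => mb | m1_1 => e end).
  split; [|split; [|repeat split]].
  - intros [] [] E; try reflexivity; exfalso; congruence.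
  - intros x Hx. destruct (below_atom_cases M e x Hx) as [->|[->|Ix]].
    + exists m1_0. reflexivity.
    + exists m1_1. reflexivity.
    + destruct (classic (x = ma)) as [->|Nxa]; [exists m1_a; reflexivity|].
      destruct (classic (x = mb)) as [->|Nxb]; [exists m1_b; reflexivity|].
      exfalso. apply (inner_at_most_two M HM Hsk e He Hatom ma mb x); auto.
  - intros []; interval_case.
  - intros [] []; interval_case.
  - intros [] []; interval_case.
  - intros []; interval_case.
Qed.

Lemma interval_iso_atom_0a1 m : inner e m -> (forall x, inner e x -> x = m) ->
  interval_iso M e M1_0a1.
Proof.
  intros Im Huniq.
  pose proof (inner_neg M HM Hsk e He Hatom m Im) as Em.
  pose proof Im as [Lm [Zm Tm]].
  apply (interval_iso_sub_M1 M e _ _ _ _ _ _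
    (fun u => match u with m1_0 => dbot | m1_a | m1_b => m | m1_1 => e end)).
  - intros [] [] pu pv E; try reflexivity; try not_in_sub; exfalso; congruence.
  - intros x Hx. destruct (below_atom_cases M e x Hx) as [->|[->|Ix]].
    + exists m1_0. split; [left|]; reflexivity.
    + exists m1_1. split; [right; right|]; reflexivity.
    + exists m1_a. split; [right; left; reflexivity | symmetry; auto].
  - intros [] pu; interval_case.
  - intros [] [] pu pv; interval_case.
  - intros [] [] pu pv; interval_case.
  - intros [] pu; interval_case.
  - reflexivity.
  - reflexivity.
Qed.

Lemma interval_iso_atom_01 : (forall x, ~ inner e x) -> interval_iso M e M1_01.
Proof.
  intro Hnone.
  apply (interval_iso_sub_M1 M e _ _ _ _ _ _
    (fun u => match u with m1_1 => e | _ => dbot end)).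
  - intros [] [] pu pv E; try reflexivity; try not_in_sub; exfalso; congruence.
  - intros x Hx. destruct (below_atom_cases M e x Hx) as [->|[->|Ix]].
    + exists m1_0. split; [left|]; reflexivity.
    + exists m1_1. split; [right|]; reflexivity.
    + exfalso. exact (Hnone x Ix).
  - intros [] pu; interval_case.
  - intros [] [] pu pv; interval_case.
  - intros [] [] pu pv; interval_case.
  - intros [] pu; interval_case.
  - reflexivity.
  - reflexivity.
Qed.

Lemma interval_iso_atom : exists i j k, interval_iso M e (std_prod i j k).
Proof.
  destruct (classic (exists m, inner e m)) as [[ma Ia]|Hnone].
  - destruct (classic (exists m, inner e m /\ m <> ma)) as [[mb [Ib Nab]]|Hunique].
    + exists 0, 0, 1. apply (interval_iso_bij_hom M _ _ _ _
        (interval_iso_atom_M1 ma mb Ia Ib (not_eq_sym Nab)) bij_hom_std_prod_M1).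
    + assert (Huniq : forall x, inner e x -> x = ma).
      { intros x Ix. apply NNPP. intro Nx. apply Hunique. exists x. auto. }
      exists 0, 1, 0. apply (interval_iso_bij_hom M _ _ _ _
        (interval_iso_atom_0a1 ma Ia Huniq) bij_hom_std_prod_0a1).
  - assert (Hnone' : forall x, ~ inner e x) by (intros x Ix; apply Hnone; exists x; exact Ix).
    exists 1, 0, 0. apply (interval_iso_bij_hom M _ _ _ _
      (interval_iso_atom_01 Hnone') bij_hom_std_prod_01).
Qed.

End AtomInterval.

(** * Decomposition *)

Lemma cover_remove {A : Type} (P Q : A -> Prop) (l : list A) (y : A) :
  (forall x, P x -> In x l) -> (forall x, Q x -> P x) -> P y -> ~ Q y ->
  exists l', length l' < length l /\ forall x, Q x -> In x l'.
Proof.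
  intros Hcov HQP Py NQy. destruct (in_split y l (Hcov y Py)) as [l1 [l2 ->]].
  exists (l1 ++ l2). split; [rewrite !length_app; simpl; lia|].
  intros x Qx. assert (Hx := Hcov x (HQP x Qx)). rewrite !in_app_iff in *.
  destruct Hx as [|[->|]]; tauto.
Qed.

Section Decomposition.
Variable M : dmOps.
Hypothesis HM : is_deMorgan M.
Hypothesis Hsk : skeletal_congruences M.
Notation B := (skeleton M).
Notation dle := (dle M).

Lemma skeleton_split b e : B b -> B e -> dle b e ->
  B (e ⊓ dneg b) /\ dle (b ⊓ (e ⊓ dneg b)) dbot /\ b ⊔ (e ⊓ dneg b) = e.
Proof.
  intros Hb He Hbe. pose proof (skeleton_meetN M HM b Hb). split; [|split].
  - apply (skeleton_meet M HM); [exact He | apply (skeleton_neg M HM), Hb].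
  - dm_le M HM.
  - transitivity ((b ⊔ e) ⊓ (b ⊔ dneg b)); [dm_eq M HM|].
    unfold skeleton in Hb. rewrite Hb. dm_eq M HM.
Qed.

Lemma interval_iso_decompose n e : B e ->
  (exists l, length l <= n /\ forall x, dle x e -> In x l) ->
  exists i j k, interval_iso M e (std_prod i j k).
Proof.
  revert e. induction n as [|n IH]; intros e He [l [Hlen Hcov]].
  - destruct l; [|simpl in Hlen; lia]. destruct (Hcov dbot (dle0x M HM e)).
  - destruct (classic (forall b, B b -> dle b e -> b = dbot \/ b = e)) as [Hatom|Hsplit].
    + destruct (classic (e = dbot)) as [->|He0].
      * exists 0, 0, 0. apply (interval_iso_bot M HM), std_prod0_trivial.
      * exact (interval_iso_atom M HM Hsk e He Hatom He0).
    + assert (Hb : exists b, B b /\ dle b e /\ b <> dbot /\ b <> e).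
      { apply NNPP. intro Hno. apply Hsplit. intros b Hb Hbe.
        destruct (classic (b = dbot)); [auto|]. destruct (classic (b = e)); [auto|].
        exfalso. apply Hno. exists b. auto. }
      destruct Hb as [b [Hb [Hbe [Hb0 Hbe']]]].
      destruct (skeleton_split b e Hb He Hbe) as [Hc [Hdisj Hjoin]].
      set (c := e ⊓ dneg b) in *.
      assert (Hce : dle c e) by (unfold c; dm_le M HM).
      assert (Hbot : forall x, dle x b -> dle x c -> x = dbot)
        by (intros; apply (dle_anti M HM); dm_le M HM).
      assert (Hc0 : c <> dbot) by (intro E; apply Hbe'; rewrite <- Hjoin, E; symmetry; apply (joinx0 M HM)).
      destruct (IH b Hb) as [i1 [j1 [k1 Iso1]]].
      { destruct (cover_remove _ _ l c Hcov (fun x Hx => dle_trans M HM _ _ _ Hx Hbe) Hce)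
          as [l' [Hl' Hcov']]; [|exists l'; split; [lia | exact Hcov']].
        intro Hcb. exact (Hc0 (Hbot c Hcb (dle_refl M HM c))). }
      destruct (IH c Hc) as [i2 [j2 [k2 Iso2]]].
      { destruct (cover_remove _ _ l b Hcov (fun x Hx => dle_trans M HM _ _ _ Hx Hce) Hbe)
          as [l' [Hl' Hcov']]; [|exists l'; split; [lia | exact Hcov']].
        intro Hbc. exact (Hb0 (Hbot b (dle_refl M HM b) Hbc)). }
      exists (i1 + i2), (j1 + j2), (k1 + k2). rewrite <- Hjoin.
      apply (interval_iso_bij_hom M _ _ _ _
        (interval_iso_prod M HM b c _ _ Hb Hc Hdisj Iso1 Iso2)
        (bij_hom_std_prod_split i1 j1 k1 i2 j2 k2)).
Qed.

End Decomposition.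

Theorem mainTheorem3 (M : dmOps) (HM : is_deMorgan M) (Hfin : finite_alg M) :
  perfect_extension M (skeleton M) <->
  exists i j k : nat,
    isomorphic M (prod_alg (pow_alg M1_01 i) (prod_alg (pow_alg M1_0a1 j) (pow_alg M1 k))).
Proof.
  split.
  - intro Hperf. pose proof (skeletal_of_perfect M HM Hfin Hperf) as Hsk.
    destruct Hfin as [l Hl].
    destruct (interval_iso_decompose M HM Hsk (length l) dtop (skeleton_top M HM))
      as [i [j [k Iso]]]; [exists l; auto|].
    exists i, j, k. exact (isomorphic_of_interval_iso_top M HM _ Iso).
  - intros [i [j [k Iso]]]. apply perfect_of_skeletal; [exact HM|].
    destruct (bij_hom_of_isomorphic _ _ Iso) as [f Hf].
    exact (skeletal_bij_hom _ _ _ Hf (skeletal_std_prod i j k)).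
Qed.
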